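(* Let $n\geq 4$ and $m>3$ be integers and let $\psi$ be an automorphism of $\mathcal{CSR}(m,n)$. Let $a\neq b$ in $[m]$ and let $\xi,\xi'$ be vertices. If $\psi(\xi+S_{ab})=\varsigma+S_{pq}$ and $\psi(\xi'+S_{ab})=\varsigma'+S_{rs}$ for some vertices $\varsigma,\varsigma'$ and some $p\neq q$, $r\neq s$ in $[m]$, then $\{p,q\}=\{r,s\}$.
   Context: For positive integers $m,n$, the cyclic simplicial rook graph $\mathcal{CSR}(m,n)$ is the graph whose vertices are the vectors $(a_1,\dots,a_m)\in\mathbb{Z}_n^m$ with $a_1+\cdots+a_m\equiv 0 \pmod n$, two vertices being adjacent if and only if their vectors differ in exactly two coordinates. $[m]=\{1,\dots,m\}$; $e_i\in\mathbb{Z}_n^m$ is the vector with $1$ in coordinate $i$ and $0$ elsewhere; for distinct $a,b\in[m]$, $S_{ab}=\{\alpha(e_a-e_b)\mid \alpha\in\mathbb{Z}_n\}$; and $x+A=\{x+y\mid y\in A\}$. *)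

From HB Require Import structures.
From mathcomp Require Import all_boot all_order all_algebra.
Set Implicit Arguments. Unset Strict Implicit. Unset Printing Implicit Defensive.
Import GRing.Theory.
Local Open Scope ring_scope.

(* Vectors in Z_n^m, coordinates indexed by 'I_m (i.e. [m] shifted to 0..m-1). *)
Definition vec (m n : nat) := {ffun 'I_m -> 'Z_n}.

Definition evec (m n : nat) (i : 'I_m) : vec m n := [ffun j => (j == i)%:R].

Definition csr_vertex (m n : nat) := {x : vec m n | \sum_(i < m) x i == 0}.

Definition csr_adj (m n : nat) (x y : csr_vertex m n) : bool :=
  #|[set i : 'I_m | val x i != val y i]| == 2%N.

Definition csr_automorphism (m n : nat) (psi : csr_vertex m n -> csr_vertex m n) :=
  bijective psi /\ forall x y, csr_adj (psi x) (psi y) = csr_adj x y.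

Definition coset_S (m n : nat) (x : vec m n) (a b : 'I_m) : {set csr_vertex m n} :=
  [set v : csr_vertex m n |
     [exists alpha : 'Z_n,
        val v == [ffun i => x i + alpha * (evec n a i - evec n b i)]]].

(* Write x + S_ab for the line through x in direction {a, b}.  For an edge uv
   with v = u + al (e_a - e_b), the common neighbours of u and v are the other
   points of u + S_ab and the points u + al (e_a - e_x), u + al (e_x - e_b) with
   x outside {a, b}.  When m > 3 the points of the line are singled out by
   adjacency alone: their neighbours among the common neighbours form a clique,
   and they share at least three further neighbours with every non-adjacent
   common neighbour, while each of the other common neighbours fails one of
   these two tests.  Hence automorphisms map lines to lines.  The lines x + S_ab
   and (x + be (e_a - e_c)) + S_ab, with c outside {a, b} and be <> 0, are
   disjoint and every point of the first has two neighbours on the second; when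
   n >= 4, two lines related in this way have the same direction.  Joining
   xi + S_ab to xi' + S_ab by such steps, one coordinate c at a time, transports
   the direction of the image line. *)

From mathcomp Require Import all_boot all_order all_algebra ring.
Set Implicit Arguments. Unset Strict Implicit. Unset Printing Implicit Defensive.
Import GRing.Theory.
Local Open Scope ring_scope.

Ltac simp_neq := repeat first
  [ rewrite eqxx
  | match goal with
    | H : is_true (?i != ?j) |- context [?i == ?j] => rewrite (negbTE H)
    | H : is_true (?i != ?j) |- context [?j == ?i] => rewrite (eq_sym j i) (negbTE H)
    end ].

Ltac case_index k := repeat (match goal with |- context [k == ?i] =>
  let h := fresh "hk" in have [h|h] := eqVneq k i; [subst k|] end; simp_neq; rewrite /=).

Ltac coord := rewrite ?ffunE; simp_neq; rewrite /=; try done.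

Ltac ffun_ring := let k := fresh "k" in
  apply/ffunP => k; rewrite !ffunE; case_index k; ring.

Lemma neq0_of_eq (R : nmodType) (x y : R) : x = y -> y != 0 -> x != 0.
Proof. by move=> ->. Qed.

Ltac nonzero_as y := apply: (@neq0_of_eq _ _ y); [ring | try assumption].

Lemma card_gt2 (T : finType) (A : {set T}) i j k : i != j -> i != k -> j != k ->
  i \in A -> j \in A -> k \in A -> (2 < #|A|)%N.
Proof.
move=> ij ik jk iA jA kA; apply: leq_trans (subset_leq_card (_ : [set i; j; k] \subset A)).
  by rewrite -setUA cardsU1 cards2 jk !inE negb_or ij ik.
by apply/subsetP => z; rewrite !inE => /orP[/orP[]|] /eqP ->.
Qed.

Lemma card_gt3 (T : finType) (A : {set T}) i1 i2 i3 i4 :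
  i1 != i2 -> i1 != i3 -> i1 != i4 -> i2 != i3 -> i2 != i4 -> i3 != i4 ->
  i1 \in A -> i2 \in A -> i3 \in A -> i4 \in A -> (3 < #|A|)%N.
Proof.
move=> h12 h13 h14 h23 h24 h34 h1 h2 h3 h4.
rewrite (cardsD1 i4) h4 add1n ltnS.
by apply: (card_gt2 h12 h13 h23); rewrite !inE; apply/andP.
Qed.

Lemma avoid3 (T : finType) (a b c : T) : (3 < #|T|)%N ->
  exists y : T, [&& y != a, y != b & y != c].
Proof.
move=> hT; apply/existsP; apply: contraLR hT; rewrite negb_exists -leqNgt => /forallP h.
rewrite -cardsT; apply: leq_trans (subset_leq_card (_ : _ \subset [set a; b; c])) _.
  by apply/subsetP => y _; move: (h y); rewrite !inE; do 3 case: (_ == _).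
by rewrite -setUA cardsU1 cardsU1 cards1; do 2 case: (_ \notin _).
Qed.

Lemma setU2_eq (T : finType) (p q r s : T) : p != q ->
  (p == r) || (p == s) -> (q == r) || (q == s) -> [set p; q] = [set r; s].
Proof.
move=> pq /orP[/eqP <-|/eqP <-] /orP[/eqP qr|/eqP qs]; subst => //.
- by rewrite eqxx in pq.
- by rewrite setUC.
- by rewrite eqxx in pq.
Qed.

Lemma card_setD2 (T : finType) (i j : T) (B : {set T}) : i != j ->
  (i \in B) != (j \in B) -> #|[set i; j] :\: B| = 1%N.
Proof.
move=> ij; case iB: (i \in B); case jB: (j \in B) => // _; apply/eqP/cards1P.
  exists j; apply/setP => k; rewrite !inE; have [->|kj] := eqVneq k j; first by rewrite jB orbT.
  by rewrite orbF; have [->|ki] := eqVneq k i; rewrite ?iB ?andbF.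
exists i; apply/setP => k; rewrite !inE; have [->|ki] := eqVneq k i; first by rewrite iB.
by rewrite orFb; have [->|kj] := eqVneq k j; rewrite ?jB ?andbF.
Qed.

Section Vectors.

Variables m n : nat.
Local Notation vT := (vec m n).

Definition dvec (c : 'Z_n) (i j : 'I_m) : vT := [ffun k => c * (evec n i k - evec n j k)].
Definition vsum (w : vT) := \sum_(k < m) w k.
Definition supp (w : vT) := [set k | w k != 0].

Lemma vsumD (w1 w2 : vT) : vsum (w1 + w2) = vsum w1 + vsum w2.
Proof. by rewrite /vsum -big_split; apply: eq_bigr => k _; rewrite ffunE. Qed.

Lemma vsumB (w1 w2 : vT) : vsum (w1 - w2) = vsum w1 - vsum w2.
Proof. by rewrite /vsum -sumrB; apply: eq_bigr => k _; rewrite !ffunE. Qed.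

Lemma vsum_pair (w : vT) c d : c != d ->
  (forall k, k != c -> k != d -> w k = 0) -> vsum w = w c + w d.
Proof.
move=> cd h; rewrite /vsum (bigD1 c) //= (bigD1 d) 1?eq_sym //= big1 ?addr0 //.
by move=> k /andP[kc kd]; apply: h.
Qed.

Lemma vsum_dvec c i j : vsum (dvec c i j) = 0.
Proof.
have [<-|ij] := eqVneq i j.
  by rewrite /vsum big1 // => k _; rewrite ffunE subrr mulr0.
rewrite (vsum_pair ij) => [|k ki kj]; coord; ring.
Qed.

Lemma dvec_l c i j : i != j -> dvec c i j i = c.
Proof. by move=> ij; coord; ring. Qed.

Lemma dvec_r c i j : i != j -> dvec c i j j = - c.
Proof. by move=> ij; coord; ring. Qed.

Lemma dvec0 i j : dvec 0 i j = 0.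
Proof. by apply/ffunP => k; rewrite !ffunE mul0r. Qed.

Lemma dvec_swap c i j : dvec c i j = dvec (- c) j i.
Proof. by apply/ffunP => k; rewrite !ffunE; ring. Qed.

Lemma dvecB c1 c2 i j : dvec c1 i j - dvec c2 i j = dvec (c1 - c2) i j.
Proof. by apply/ffunP => k; rewrite !ffunE; ring. Qed.

Lemma supp_dvec c i j : i != j -> c != 0 -> supp (dvec c i j) = [set i; j].
Proof.
move=> ij c0; apply/setP => k; rewrite !inE !ffunE.
case_index k; first by nonzero_as c.
  by nonzero_as (- c); rewrite oppr_eq0.
by rewrite subrr mulr0 eqxx.
Qed.

Lemma supp_neq2 (w : vT) i j k : i != j -> i != k -> j != k ->
  w i != 0 -> w j != 0 -> w k != 0 -> #|supp w| != 2%N.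
Proof.
move=> ij ik jk wi wj wk; rewrite neq_ltn orbC.
by rewrite (card_gt2 ij ik jk) // inE.
Qed.

Lemma zero_sum_on_pair (w : vT) c d : c != d -> vsum w = 0 ->
  (forall k, k != c -> k != d -> w k = 0) -> w = dvec (w c) c d.
Proof.
move=> cd ws h; have wd : w d = - w c.
  by apply/eqP; rewrite -addr_eq0 addrC -(vsum_pair cd h) ws.
apply/ffunP => k; rewrite !ffunE.
have [->|kc] := eqVneq k c; first by simp_neq; rewrite /=; ring.
have [->|kd] := eqVneq k d; first by rewrite wd; simp_neq; rewrite /=; ring.
by rewrite (h k) //; simp_neq; rewrite /=; ring.
Qed.

Lemma supp2_dvec (w : vT) : vsum w = 0 -> #|supp w| = 2%N ->
  exists i j c, [/\ i != j, c != 0 & w = dvec c i j].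
Proof.
move=> ws /eqP/cards2P[i [j [ij E]]].
have wk k : (w k != 0) = (k \in [set i; j]) by rewrite -E inE.
exists i, j, (w i); split => //; first by rewrite wk !inE eqxx.
apply: zero_sum_on_pair => // k ki kj.
by apply/eqP; move: (wk k); rewrite !inE (negbTE ki) (negbTE kj) => /negbFE.
Qed.

(* If p and p - w both have two-element supports and w is nonzero at four
   coordinates, these supports are disjoint and cover those four, so p agrees
   with w or with 0 everywhere. *)
Lemma supp2_split (p w : vT) i1 i2 i3 i4 :
  i1 != i2 -> i1 != i3 -> i1 != i4 -> i2 != i3 -> i2 != i4 -> i3 != i4 ->
  w i1 != 0 -> w i2 != 0 -> w i3 != 0 -> w i4 != 0 ->
  #|supp p| = 2%N -> #|supp (p - w)| = 2%N -> forall k, p k = 0 \/ p k = w k.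
Proof.
move=> h12 h13 h14 h23 h24 h34 w1 w2 w3 w4 hP hQ.
have inPQ k : w k != 0 -> k \in supp p :|: supp (p - w).
  move=> wk; rewrite !inE !ffunE; have [->|//] := eqVneq (p k) 0.
  by rewrite add0r oppr_eq0 wk.
have := card_gt3 h12 h13 h14 h23 h24 h34 (inPQ _ w1) (inPQ _ w2) (inPQ _ w3) (inPQ _ w4).
have := cardsUI (supp p) (supp (p - w)); rewrite hP hQ => E h4.
have : (#|supp p :&: supp (p - w)%R| <= 0)%N.
  by rewrite -(leq_add2l #|supp p :|: supp (p - w)%R|) E addn0.
rewrite leqn0 cards_eq0 => /eqP I0 k.
have [pk0|pk0] := eqVneq (p k) 0; [by left | right].
apply/eqP; rewrite -subr_eq0; apply/negPn/negP => hk.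
by have := in_set0 k; rewrite -I0 !inE !ffunE pk0 hk.
Qed.

End Vectors.

Section Vertices.

Variables m n : nat.
Local Notation V := (csr_vertex m n).
Local Notation vT := (vec m n).

Lemma vsum_val (u : V) : vsum (val u) = 0.
Proof. exact: eqP (valP u). Qed.

Definition shift (u : V) (w : vT) : V := insubd u (val u + w).

Lemma val_shift u w : vsum w = 0 -> val (shift u w) = val u + w.
Proof. by move=> w0; rewrite insubdK // unfold_in -/(vsum _) vsumD vsum_val w0 addr0. Qed.

Lemma val_shift_dvec u c i j : val (shift u (dvec c i j)) = val u + dvec c i j.
Proof. exact/val_shift/vsum_dvec. Qed.

Lemma adj_supp (x y : V) : csr_adj x y = (#|supp (val x - val y)| == 2%N).
Proof.
rewrite /csr_adj (_ : [set k | _] = supp (val x - val y)) //.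
by apply/setP => k; rewrite !inE !ffunE subr_eq0.
Qed.

Lemma adj_sym (x y : V) : csr_adj x y = csr_adj y x.
Proof. by rewrite /csr_adj; congr (_ == _); apply: eq_card => k; rewrite !inE eq_sym. Qed.

Lemma adj_irr (x : V) : ~~ csr_adj x x.
Proof.
rewrite adj_supp subrr; apply/eqP => /eqP/cards2P[i [j [ij /setP/(_ i)]]].
by rewrite !inE ffunE eqxx.
Qed.

Lemma adj_dvec (y z : V) c i j : i != j -> c != 0 -> val y = val z + dvec c i j -> csr_adj y z.
Proof. by move=> ij c0 E; rewrite adj_supp E addrC addKr supp_dvec // cards2 ij. Qed.

Lemma adj_dvecP (z u : V) : csr_adj z u ->
  exists i j c, [/\ i != j, c != 0 & val z = val u + dvec c i j].
Proof.
rewrite adj_supp => /eqP/supp2_dvec[|i [j [c [ij c0 E]]]].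
  by rewrite vsumB !vsum_val subrr.
by exists i, j, c; split => //; rewrite -E addrC subrK.
Qed.

Section Shifts.

Variables (u y z : V) (wy wz : vT).
Hypotheses (Ey : val y = val u + wy) (Ez : val z = val u + wz).

Lemma val_sub_shifts : val y - val z = wy - wz.
Proof. by rewrite Ey Ez opprD addrACA subrr add0r. Qed.

Lemma nadj_shifts i j k : i != j -> i != k -> j != k ->
  (wy - wz) i != 0 -> (wy - wz) j != 0 -> (wy - wz) k != 0 -> ~~ csr_adj y z.
Proof. by move=> ij ik jk hi hj hk; rewrite adj_supp val_sub_shifts (supp_neq2 ij ik jk). Qed.

Lemma neq_shifts k : (wy - wz) k != 0 -> y != z.
Proof. by apply: contraNneq => yz; rewrite -val_sub_shifts yz !ffunE subrr. Qed.

End Shifts.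

Lemma adj_on_line (u y z : V) c1 c2 a b : a != b ->
  val y = val u + dvec c1 a b -> val z = val u + dvec c2 a b -> y != z -> csr_adj y z.
Proof.
move=> ab Ey Ez yz; apply: (adj_dvec (c := c1 - c2) ab); last by rewrite Ey Ez; ffun_ring.
by rewrite subr_eq0; apply: contraNneq yz => c12; apply/eqP/val_inj; rewrite Ey Ez c12.
Qed.

Lemma coset_SP (x : vT) (z : V) a b :
  reflect (exists c, val z = x + dvec c a b) (z \in coset_S x a b).
Proof.
rewrite inE; apply: (iffP existsP) => -[c E]; exists c; last apply/eqP;
  by apply/ffunP => k; rewrite ?(eqP E) ?E !ffunE.
Qed.

Lemma coset_S_shift (X X' : V) a b g : val X' = val X + dvec g a b ->
  coset_S (val X) a b = coset_S (val X') a b.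
Proof.
move=> EX; apply/setP => z; apply/coset_SP/coset_SP => -[g1 E1].
  by exists (g1 - g); rewrite E1 EX; ffun_ring.
by exists (g1 + g); rewrite E1 EX; ffun_ring.
Qed.

Lemma coset_S_id (u : V) a b : u \in coset_S (val u) a b.
Proof. by apply/coset_SP; exists 0; rewrite dvec0 addr0. Qed.

End Vertices.

(** * Lines are determined by adjacency *)

Section LineOf.

Variables m n : nat.
Local Notation V := (csr_vertex m n).

Definition common_nbr (u v z : V) := csr_adj z u && csr_adj z v.

Definition nbr_clique (u v z : V) := [forall z1, forall z2,
  [&& common_nbr u v z1, common_nbr u v z2, csr_adj z z1, csr_adj z z2 & z1 != z2]
    ==> csr_adj z1 z2].

Definition common_nbrs_off (u v z z' : V) :=
  [set y | [&& y != u, y != v, csr_adj y z & csr_adj y z']].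

Definition nonadj_rich (u v z : V) := [forall z',
  [&& common_nbr u v z', z' != z & ~~ csr_adj z z'] ==> (2 < #|common_nbrs_off u v z z'|)%N].

(* The line through the edge uv, described by adjacency alone. *)
Definition line_of (u v : V) := [set z | [|| z == u, z == v |
  [&& common_nbr u v z, nbr_clique u v z & nonadj_rich u v z]]].

Section Automorphism.

Variable psi : V -> V.
Hypothesis psi_bij : bijective psi.
Hypothesis psi_adj : forall x y, csr_adj (psi x) (psi y) = csr_adj x y.

Let psi_inj : injective psi. Proof. exact: bij_inj. Qed.

Lemma forall_bij (P : pred V) : [forall x, P (psi x)] = [forall x, P x].
Proof.
case: psi_bij => g _ psiK; apply/forallP/forallP => h x; last exact: h.
by rewrite -(psiK x); apply: h.
Qed.

Lemma card_common_nbrs_off_aut u v z z' :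
  #|common_nbrs_off (psi u) (psi v) (psi z) (psi z')| = #|common_nbrs_off u v z z'|.
Proof.
rewrite -(card_preimset _ psi_inj); apply: eq_card => y.
by rewrite !inE !psi_adj !(inj_eq psi_inj).
Qed.

Lemma mem_line_of_aut u v z : (psi z \in line_of (psi u) (psi v)) = (z \in line_of u v).
Proof.
rewrite !inE !(inj_eq psi_inj) /common_nbr !psi_adj /nbr_clique /nonadj_rich.
congr [|| _, _ | [&& _, _ & _]].
  rewrite -forall_bij; apply: eq_forallb => z1; rewrite -forall_bij; apply: eq_forallb => z2.
  by rewrite /common_nbr !psi_adj !(inj_eq psi_inj).
rewrite -forall_bij; apply: eq_forallb => z'.
by rewrite /common_nbr card_common_nbrs_off_aut !psi_adj !(inj_eq psi_inj).
Qed.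

Lemma line_of_aut u v : psi @: line_of u v = line_of (psi u) (psi v).
Proof.
apply/setP => w; case: psi_bij => g _ psiK.
by rewrite -(psiK w) (mem_imset _ _ psi_inj) mem_line_of_aut.
Qed.

End Automorphism.

Definition common_nbr_shape (u : V) al a b (z : V) :=
  [\/ exists2 be, (be != 0) && (be != al) & val z = val u + dvec be a b,
      exists2 x, (x != a) && (x != b) & val z = val u + dvec al a x
    | exists2 x, (x != a) && (x != b) & val z = val u + dvec al x b].

Lemma common_nbr_shape_swap (u z : V) al a b :
  common_nbr_shape u (- al) b a z -> common_nbr_shape u al a b z.
Proof.
rewrite /common_nbr_shape; case=> [[be /andP[be0 bal] E]|[x /andP[xb xa] E]|[x /andP[xb xa] E]].
- apply: Or31; exists (- be); last by rewrite E dvec_swap.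
  by rewrite oppr_eq0 be0 -eqr_opp opprK.
- by apply: Or33; exists x; rewrite ?xa ?xb // E dvec_swap opprK.
- by apply: Or32; exists x; rewrite ?xa ?xb // E dvec_swap opprK.
Qed.

Section CommonNbrs.

Variables (u v : V) (al : 'Z_n) (a b : 'I_m).
Hypotheses (ab : a != b) (al0 : al != 0) (Ev : val v = val u + dvec al a b).

Lemma common_nbr_shape_a (z : V) j be : a != j -> be != 0 ->
  val z = val u + dvec be a j -> csr_adj z v -> common_nbr_shape u al a b z.
Proof.
move=> aj be0 Ez zv; rewrite /common_nbr_shape; have [jb|jb] := eqVneq j b.
  subst j; apply: Or31; exists be => //; rewrite be0 /=.
  apply: contraTneq zv => bal; suff -> : z = v by rewrite adj_irr.
  by apply/val_inj; rewrite Ez Ev bal.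
have [bal|bal] := eqVneq be al.
  by apply: Or32; exists j; rewrite 1?eq_sym ?aj ?jb // Ez bal.
have bj : b != j by rewrite eq_sym.
move: zv; rewrite (negbTE (nadj_shifts Ez Ev ab aj bj _ _ _)) //; coord.
- by nonzero_as (be - al); rewrite subr_eq0.
- by nonzero_as al.
- by nonzero_as (- be); rewrite oppr_eq0.
Qed.

End CommonNbrs.

Lemma common_nbr_classify (u v z : V) al a b : a != b -> al != 0 ->
  val v = val u + dvec al a b -> common_nbr u v z -> common_nbr_shape u al a b z.
Proof.
move=> ab al0 Ev /andP[/adj_dvecP[i [j [be [ij be0 Ez]]]] zv].
have ba : b != a by rewrite eq_sym.
have Ev' : val v = val u + dvec (- al) b a by rewrite Ev dvec_swap.
have Ez' : val z = val u + dvec (- be) j i by rewrite Ez dvec_swap.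
have nal0 : - al != 0 by rewrite oppr_eq0.
have nbe0 : - be != 0 by rewrite oppr_eq0.
have ji : j != i by rewrite eq_sym.
have [ia|ia] := eqVneq i a.
  by subst i; exact: (common_nbr_shape_a ab al0 Ev ij be0 Ez zv).
have [ib|ib] := eqVneq i b.
  by subst i; apply/common_nbr_shape_swap/(common_nbr_shape_a ba nal0 Ev' ij be0 Ez zv).
have [ja|ja] := eqVneq j a.
  by subst j; exact: (common_nbr_shape_a ab al0 Ev ji nbe0 Ez' zv).
have [jb|jb] := eqVneq j b.
  by subst j; apply/common_nbr_shape_swap/(common_nbr_shape_a ba nal0 Ev' ji nbe0 Ez' zv).
move: zv; rewrite (negbTE (nadj_shifts Ez Ev ij ia ja _ _ _)) //; coord.
- by nonzero_as be.
- by nonzero_as (- be); rewrite oppr_eq0.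
- by nonzero_as (- al); rewrite oppr_eq0.
Qed.

End LineOf.

Section StarPattern.

Variables (m n : nat) (al : 'Z_n) (a b x x' : 'I_m).
Hypotheses (ab : a != b) (ax : a != x) (ax' : a != x') (bx : b != x) (bx' : b != x')
  (xx' : x != x') (al2 : al + al != 0).

Let alN : - al != al. Proof. by apply: contraNneq al2 => h; rewrite -{1}h addNr. Qed.

Lemma star_diffE k : (dvec al a x - dvec al x' b) k =
  if (k == a) || (k == b) then al else if (k == x) || (k == x') then - al else 0.
Proof. by rewrite !ffunE; case_index k; ring. Qed.

Lemma star_diff_pattern c i j : i != j -> c != 0 ->
    (forall k, dvec c i j k = 0 \/ dvec c i j k = (dvec al a x - dvec al x' b) k) ->
  exists i' j', [/\ (i' == a) || (i' == b), (j' == x) || (j' == x') & dvec c i j = dvec al i' j'].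
Proof.
move=> ij c0 hS.
have wi : (dvec al a x - dvec al x' b) i = c.
  have [|<-] := hS i; rewrite dvec_l // => c_eq0.
  by move: c0; rewrite c_eq0 eqxx.
have wj : (dvec al a x - dvec al x' b) j = - c.
  have [|<-] := hS j; rewrite dvec_r // => c_eq0.
  by move: c0; rewrite -oppr_eq0 c_eq0 eqxx.
rewrite !star_diffE in wi wj.
case: ifP wi => [iab ali|_]; last case: ifP => [ixx nali|_ /esym/eqP]; last by rewrite (negbTE c0).
  case: ifP wj => [_ /eqP|_]; first by rewrite -ali eq_sym (negbTE alN).
  case: ifP => [jxx _|_ /esym/eqP]; last by rewrite oppr_eq0 (negbTE c0).
  by exists i, j; rewrite ali.
case: ifP wj => [jab alj|_]; last first.
  case: ifP => [_ /eqP|_ /esym/eqP]; last by rewrite oppr_eq0 (negbTE c0).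
  by rewrite -nali opprK (negbTE alN).
by exists j, i; rewrite dvec_swap alj.
Qed.

End StarPattern.

Section EdgeNbrs.

Variables (m n : nat) (u v : csr_vertex m n) (al : 'Z_n) (a b : 'I_m).
Hypotheses (ab : a != b) (al0 : al != 0) (Ev : val v = val u + dvec al a b).

Lemma line_common_nbr z be : be != 0 -> be != al ->
  val z = val u + dvec be a b -> common_nbr u v z.
Proof.
move=> be0 bal Ez; apply/andP; split; first exact: adj_dvec ab be0 Ez.
apply: (adj_dvec (c := be - al) ab); first by rewrite subr_eq0.
by rewrite Ez Ev; ffun_ring.
Qed.

Lemma star_common_nbr z x : x != a -> x != b ->
  val z = val u + dvec al a x -> common_nbr u v z.
Proof.
move=> xa xb Ez; have ax : a != x by rewrite eq_sym.
have bx : b != x by rewrite eq_sym.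
apply/andP; split; first exact: adj_dvec ax al0 Ez.
by apply: (adj_dvec bx al0); rewrite Ez Ev; ffun_ring.
Qed.

Lemma line_star_nadj z z' be x : x != a -> x != b -> be != 0 -> be != al ->
  val z = val u + dvec be a b -> val z' = val u + dvec al a x -> ~~ csr_adj z z'.
Proof.
move=> xa xb be0 bal Ez Ez'; have ax : a != x by rewrite eq_sym.
have bx : b != x by rewrite eq_sym.
apply: (nadj_shifts Ez Ez' ab ax bx); coord.
- by nonzero_as (be - al); rewrite subr_eq0.
- by nonzero_as (- be); rewrite oppr_eq0.
- by nonzero_as al.
Qed.

Lemma line_star_rich z z' be x : x != a -> x != b -> be != 0 -> be != al ->
  val z = val u + dvec be a b -> val z' = val u + dvec al a x ->
  (2 < #|common_nbrs_off u v z z'|)%N.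
Proof.
move=> xa xb be0 bal Ez Ez'; have ax : a != x by rewrite eq_sym.
have bx : b != x by rewrite eq_sym.
have Eu : val u = val u + 0 by rewrite addr0.
set W2 := dvec be a x + dvec (al - be) b x.
set W3 := dvec (al + be) a x + dvec (- be) b x.
have E1 := val_shift_dvec u be a x.
have E2 : val (shift u W2) = val u + W2 by rewrite val_shift // vsumD !vsum_dvec addr0.
have E3 : val (shift u W3) = val u + W3 by rewrite val_shift // vsumD !vsum_dvec addr0.
have alb : al - be != 0 by rewrite subr_eq0 eq_sym.
have nal : - al != 0 by rewrite oppr_eq0.
apply: (card_gt2 (i := shift u (dvec be a x)) (j := shift u W2) (k := shift u W3)).
- by apply: (neq_shifts E1 E2 (k := b)); coord; nonzero_as (be - al); rewrite subr_eq0.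
- by apply: (neq_shifts E1 E3 (k := b)); coord; nonzero_as be.
- by apply: (neq_shifts E2 E3 (k := a)); coord; nonzero_as (- al).
- rewrite inE; apply/and4P; split.
  + by apply: (neq_shifts E1 Eu (k := a)); coord; nonzero_as be.
  + by apply: (neq_shifts E1 Ev (k := x)); coord; nonzero_as (- be); rewrite oppr_eq0.
  + by apply: (adj_dvec (i := b) (j := x) (c := be)) => //; rewrite E1 Ez; ffun_ring.
  + by apply: (adj_dvec (i := a) (j := x) (c := be - al)); rewrite ?subr_eq0 // E1 Ez'; ffun_ring.
- rewrite inE; apply/and4P; split.
  + by apply: (neq_shifts E2 Eu (k := x)); coord; nonzero_as (- al).
  + by apply: (neq_shifts E2 Ev (k := x)); coord; nonzero_as (- al).
  + by apply: (adj_dvec (i := b) (j := x) (c := al)) => //; rewrite E2 Ez; ffun_ring.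
  + by apply: (adj_dvec (i := a) (j := b) (c := be - al)); rewrite ?subr_eq0 // E2 Ez'; ffun_ring.
- rewrite inE; apply/and4P; split.
  + by apply: (neq_shifts E3 Eu (k := x)); coord; nonzero_as (- al).
  + by apply: (neq_shifts E3 Ev (k := x)); coord; nonzero_as (- al).
  + by apply: (adj_dvec (i := a) (j := x) (c := al)) => //; rewrite E3 Ez; ffun_ring.
  + by apply: (adj_dvec (i := a) (j := b) (c := be)) => //; rewrite E3 Ez'; ffun_ring.
Qed.

Lemma star_common_nbrs_off z z' y x x' : x != a -> x != b -> x' != a -> x' != b ->
  x != x' -> al + al != 0 ->
  val z = val u + dvec al a x -> val z' = val u + dvec al x' b ->
  y \in common_nbrs_off u v z z' ->
  val y = val z' + dvec al a x \/ val y = val z' + dvec al b x.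
Proof.
move=> xa xb x'a x'b xx' al2 Ez Ez'; rewrite inE => /and4P[yu yv yz yz'].
have ax : a != x by rewrite eq_sym.
have bx : b != x by rewrite eq_sym.
have ax' : a != x' by rewrite eq_sym.
have bx' : b != x' by rewrite eq_sym.
have wE := star_diffE al ab ax ax' bx bx' xx'.
set w := dvec al a x - dvec al x' b in wE.
have Ezw : val z = val z' + w by rewrite Ez Ez' /w; ffun_ring.
have [i [j [c [ij c0 Ey]]]] := adj_dvecP yz'.
have wa : w a != 0 by rewrite wE eqxx.
have wb : w b != 0 by rewrite wE eqxx orbT.
have wx : w x != 0 by rewrite wE eqxx (negbTE xa) (negbTE xb) oppr_eq0.
have wx' : w x' != 0 by rewrite wE eqxx orbT (negbTE x'a) (negbTE x'b) oppr_eq0.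
have supp_p : #|supp (dvec c i j)| = 2%N by rewrite supp_dvec // cards2 ij.
have supp_pw : #|supp (dvec c i j - w)| = 2%N.
  by apply/eqP; rewrite -(val_sub_shifts Ey Ezw) -adj_supp.
have hS := supp2_split ab ax ax' bx bx' xx' wa wb wx wx' supp_p supp_pw.
have [i' [j' [/orP[]/eqP-> /orP[]/eqP-> E]]] :=
  star_diff_pattern ab ax ax' bx bx' xx' al2 ij c0 hS.
- by left; rewrite Ey E.
- by case/negP: yv; apply/eqP/val_inj; rewrite Ey E Ez' Ev; ffun_ring.
- by right; rewrite Ey E.
- by case/negP: yu; apply/eqP/val_inj; rewrite Ey E Ez'; ffun_ring.
Qed.

End EdgeNbrs.

Section StarNotLine.

Variables (m n : nat) (u v : csr_vertex m n) (al : 'Z_n) (a b : 'I_m).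
Hypotheses (hm : (3 < m)%N) (ab : a != b) (al0 : al != 0) (Ev : val v = val u + dvec al a b).

Let ba : b != a. Proof. by rewrite eq_sym. Qed.
Let nal0 : - al != 0. Proof. by rewrite oppr_eq0. Qed.
Let Ev' : val v = val u + dvec (- al) b a. Proof. by rewrite Ev dvec_swap. Qed.

Let fresh_index x : exists x' : 'I_m, [&& x' != a, x' != b & x' != x].
Proof. by apply: avoid3; rewrite card_ord. Qed.

Lemma star_not_clique z x : x != a -> x != b -> al + al = 0 ->
  val z = val u + dvec al a x -> ~~ nbr_clique u v z.
Proof.
move=> xa xb al2 Ez; have [x' /and3P[x'a x'b x'x]] := fresh_index x.
have E1 := val_shift_dvec u al x b; have E2 := val_shift_dvec u al a x'.
have E1' : val (shift u (dvec al x b)) = val u + dvec (- al) b x by rewrite E1 dvec_swap.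
have nadj12 : ~~ csr_adj (shift u (dvec al x b)) (shift u (dvec al a x')).
  apply: (nadj_shifts E1 E2 xb xa ba); coord.
  - by nonzero_as al.
  - by nonzero_as (- al).
  - by nonzero_as (- al).
apply/negP => /forallP/(_ (shift u _))/forallP/(_ (shift u _))/implyP clique.
move: nadj12; rewrite clique //.
apply/and5P; split.
- exact: star_common_nbr ba nal0 Ev' _ _ xb xa E1'.
- exact: star_common_nbr ab al0 Ev _ _ x'a x'b E2.
- apply: (adj_dvec ab al0).
  have -> : val z = val (shift u (dvec al x b)) + dvec al a b + dvec (al + al) b x.
    by rewrite Ez E1; ffun_ring.
  by rewrite al2 dvec0 addr0.
- by apply: (adj_dvec x'x al0); rewrite Ez E2; ffun_ring.
- by apply: (neq_shifts E1 E2 (k := a)); coord; nonzero_as (- al).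
Qed.

Lemma star_not_rich z x : x != a -> x != b -> al + al != 0 ->
  val z = val u + dvec al a x -> ~~ nonadj_rich u v z.
Proof.
move=> xa xb al2 Ez; have [x' /and3P[x'a x'b x'x]] := fresh_index x.
have ax : a != x by rewrite eq_sym.
have bx : b != x by rewrite eq_sym.
have xx' : x != x' by rewrite eq_sym.
set z' := shift u (dvec al x' b).
have E' : val z' = val u + dvec al x' b := val_shift_dvec u al x' b.
have E'' : val z' = val u + dvec (- al) b x' by rewrite E' dvec_swap.
have few : (#|common_nbrs_off u v z z'| <= 2)%N.
  apply: leq_trans (subset_leq_card (_ : common_nbrs_off u v z z' \subset
    [set shift z' (dvec al a x); shift z' (dvec al b x)])) _.
    apply/subsetP => y /(star_common_nbrs_off ab al0 Ev xa xb x'a x'b xx' al2 Ez E').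
    by rewrite !inE -!val_eqE !val_shift_dvec => -[] ->; rewrite eqxx ?orbT.
  by rewrite cards2; case: (_ != _).
apply/negP => /forallP/(_ z')/implyP rich; move: few; rewrite leqNgt rich //.
apply/and3P; split.
- exact: star_common_nbr ba nal0 Ev' _ _ x'b x'a E''.
- by apply: (neq_shifts E' Ez (k := a)); coord; nonzero_as (- al).
- apply: (nadj_shifts Ez E' ab ax bx); coord.
  + by nonzero_as al.
  + by nonzero_as al.
  + by nonzero_as (- al).
Qed.

Lemma star_not_line z x : x != a -> x != b ->
  val z = val u + dvec al a x -> ~~ (nbr_clique u v z && nonadj_rich u v z).
Proof.
move=> xa xb Ez; have [al2|al2] := eqVneq (al + al) 0.
  by rewrite (negbTE (star_not_clique xa xb al2 Ez)).
by rewrite (negbTE (star_not_rich xa xb al2 Ez)) andbF.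
Qed.

End StarNotLine.

Section LineOfE.

Variables (m n : nat) (u v : csr_vertex m n) (al : 'Z_n) (a b : 'I_m).
Hypotheses (hm : (3 < m)%N) (ab : a != b) (al0 : al != 0) (Ev : val v = val u + dvec al a b).

Let ba : b != a. Proof. by rewrite eq_sym. Qed.
Let nal0 : - al != 0. Proof. by rewrite oppr_eq0. Qed.
Let Ev' : val v = val u + dvec (- al) b a. Proof. by rewrite Ev dvec_swap. Qed.

Section OnLine.

Variables (z : csr_vertex m n) (be : 'Z_n).
Hypotheses (be0 : be != 0) (bal : be != al) (Ez : val z = val u + dvec be a b).

Let nbe0 : - be != 0. Proof. by rewrite oppr_eq0. Qed.
Let nbal : - be != - al. Proof. by rewrite eqr_opp. Qed.
Let Ez' : val z = val u + dvec (- be) b a. Proof. by rewrite Ez dvec_swap. Qed.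

Lemma line_nbr_on_line z1 : common_nbr u v z1 -> csr_adj z z1 ->
  exists be1, val z1 = val u + dvec be1 a b.
Proof.
case/(common_nbr_classify ab al0 Ev) => [[be1 _ E1]|[x /andP[xa xb] E1]|[x /andP[xa xb] E1]].
- by exists be1.
- by rewrite (negbTE (line_star_nadj ab al0 xa xb be0 bal Ez E1)).
- have E1' : val z1 = val u + dvec (- al) b x by rewrite E1 dvec_swap.
  by rewrite (negbTE (line_star_nadj ba nal0 xb xa nbe0 nbal Ez' E1')).
Qed.

Lemma line_nbr_clique : nbr_clique u v z.
Proof.
apply/forallP => z1; apply/forallP => z2; apply/implyP => /and5P[c1 c2 a1 a2 z12].
have [be1 E1] := line_nbr_on_line c1 a1; have [be2 E2] := line_nbr_on_line c2 a2.
exact: (adj_on_line ab E1 E2 z12).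
Qed.

Lemma line_nonadj_rich : nonadj_rich u v z.
Proof.
apply/forallP => z'; apply/implyP => /and3P[c' z'z nadj].
case: (common_nbr_classify ab al0 Ev c') => [[be1 _ E1]|[x /andP[xa xb] E1]|[x /andP[xa xb] E1]].
- by rewrite (adj_on_line ab Ez E1) // eq_sym in nadj.
- exact: (line_star_rich ab al0 Ev xa xb be0 bal Ez E1).
- have E1' : val z' = val u + dvec (- al) b x by rewrite E1 dvec_swap.
  exact: (line_star_rich ba nal0 Ev' xb xa nbe0 nbal Ez' E1').
Qed.

End OnLine.

Lemma line_ofE : line_of u v = coset_S (val u) a b.
Proof.
apply/setP => z; apply/idP/coset_SP.
  rewrite inE => /or3P[/eqP->|/eqP->|/and3P[c cq rich]].
  - by exists 0; rewrite dvec0 addr0.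
  - by exists al.
  case: (common_nbr_classify ab al0 Ev c) => [[be _ Ez]|[x /andP[xa xb] Ez]|[x /andP[xa xb] Ez]].
  - by exists be.
  - by move: (star_not_line hm ab al0 Ev xa xb Ez); rewrite cq rich.
  - have Ez' : val z = val u + dvec (- al) b x by rewrite Ez dvec_swap.
    by move: (star_not_line hm ba nal0 Ev' xb xa Ez'); rewrite cq rich.
case=> be Ez; rewrite inE; have [be0|be0] := eqVneq be 0.
  by rewrite (_ : z = u) ?eqxx //; apply: val_inj; rewrite Ez be0 dvec0 addr0.
have [bal|bal] := eqVneq be al.
  by rewrite (_ : z = v) ?eqxx ?orbT //; apply: val_inj; rewrite Ez Ev bal.
by rewrite (line_common_nbr ab Ev be0 bal Ez) (line_nbr_clique be0 bal Ez)
  (line_nonadj_rich be0 bal Ez) !orbT.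
Qed.

End LineOfE.

Lemma aut_maps_line m n (psi : csr_vertex m n -> csr_vertex m n) (u : csr_vertex m n) a b :
  (3 < m)%N -> csr_automorphism psi -> a != b ->
  exists p q, p != q /\ psi @: coset_S (val u) a b = coset_S (val (psi u)) p q.
Proof.
move=> hm [psi_bij psi_adj] ab.
have E1 := val_shift_dvec u 1 a b.
rewrite -(line_ofE hm ab (oner_neq0 _) E1) (line_of_aut psi_bij psi_adj).
have [p [q [c [pq c0 Ec]]]] : exists p q c, [/\ p != q, c != 0 &
    val (psi (shift u (dvec 1 a b))) = val (psi u) + dvec c p q].
  by apply: adj_dvecP; rewrite psi_adj; exact: adj_dvec ab (oner_neq0 _) E1.
by exists p, q; split; rewrite // (line_ofE hm pq c0 Ec).
Qed.

(** * Linked lines *)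

Section Parallel.

Variables m n : nat.
Local Notation V := (csr_vertex m n).
Local Notation vT := (vec m n).

Definition supp_off (c d : 'I_m) (w : vT) := supp w :\: [set c; d].

Definition linked (K K' : {set V}) := [disjoint K & K'] /\
  forall v, v \in K -> (1 < #|[set z in K' | csr_adj v z]|)%N.

Lemma mem_supp_off c d w k : (k \in supp_off c d w) = [&& k != c, k != d & w k != 0].
Proof. by rewrite !inE negb_or -andbA. Qed.

Lemma supp_offD_dvec c d w g : supp_off c d (w + dvec g c d) = supp_off c d w.
Proof.
apply/setP => k; rewrite !mem_supp_off !ffunE.
have [//|kc] := eqVneq k c; have [_|kd] := eqVneq k d; first by [].
by rewrite subrr mulr0 addr0.
Qed.

Lemma linked_aut (psi : V -> V) K K' : injective psi ->
  (forall x y, csr_adj (psi x) (psi y) = csr_adj x y) ->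
  linked K K' -> linked (psi @: K) (psi @: K').
Proof.
move=> psi_inj psi_adj [disj nbrs]; split; first by rewrite imset_disjoint.
move=> _ /imsetP[v vK ->]; apply: leq_trans (nbrs v vK) _.
rewrite -(card_imset _ psi_inj); apply/subset_leq_card/subsetP => w /imsetP[z].
by rewrite !inE => /andP[zK vz] ->; rewrite psi_adj vz imset_f.
Qed.

Lemma coset_S_coord (x : vT) (z : V) a b k : z \in coset_S x a b ->
  k != a -> k != b -> val z k = x k.
Proof.
by case/coset_SP => g -> ka kb; rewrite !ffunE (negbTE ka) (negbTE kb) subrr mulr0 addr0.
Qed.

Lemma linked_step (X X' : V) a b c be : a != b -> c != a -> c != b -> be != 0 ->
  val X' = val X + dvec be a c -> linked (coset_S (val X) a b) (coset_S (val X') a b).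
Proof.
move=> ab ca cb be0 EX; have ac : a != c by rewrite eq_sym.
have bc : b != c by rewrite eq_sym.
split.
  apply/pred0P => w /=; apply/negbTE/andP => -[/coset_S_coord/(_ ca cb) wX].
  move=> /coset_S_coord/(_ ca cb); rewrite wX EX !ffunE; simp_neq; rewrite /= => /eqP.
  by rewrite -subr_eq0 (_ : _ - _ = be); [exact/negP | ring].
move=> v /coset_SP[g Ev]; apply/card_gt1P.
exists (shift v (dvec be a c)), (shift v (dvec be b c)); split.
- rewrite inE (adj_sym v) (adj_dvec ac be0 (val_shift_dvec _ _ _ _)) andbT.
  by apply/coset_SP; exists g; rewrite val_shift_dvec Ev EX; ffun_ring.
- rewrite inE (adj_sym v) (adj_dvec bc be0 (val_shift_dvec _ _ _ _)) andbT.
  by apply/coset_SP; exists (g - be); rewrite val_shift_dvec Ev EX; ffun_ring.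
- apply: (neq_shifts (u := v) (val_shift_dvec _ _ _ _) (val_shift_dvec _ _ _ _) (k := a)).
  by coord; nonzero_as be.
Qed.

Lemma supp_off_single_pair (s0 : vT) a b c d : (3 < n)%N -> a != b ->
  (forall g, #|supp_off c d (s0 + dvec g a b)| = 1%N) -> (b == c) || (b == d).
Proof.
move=> hn ab H; apply/negPn/negP; rewrite negb_or => /andP[bc bd].
have [i0 Ei0] : exists i0 : 'I_m, supp_off c d s0 = [set i0].
  by apply/cards1P; rewrite -[s0]addr0 -(dvec0 n a b) H.
have s0E k : k != c -> k != d -> s0 k = if k == i0 then s0 i0 else 0.
  move=> kc kd; move/setP/(_ k): Ei0; rewrite mem_supp_off inE kc kd /=.
  by case: (eqVneq k i0) => [-> //|_ /negbFE/eqP].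
have [i0c i0d s0i0] : [/\ i0 != c, i0 != d & s0 i0 != 0].
  by apply/and3P; rewrite -mem_supp_off Ei0 set11.
have two_off g (i j : 'I_m) : i != j -> i \in supp_off c d (s0 + dvec g a b) ->
    j \in supp_off c d (s0 + dvec g a b) -> False.
  move=> ij iS jS; have : (1 < #|supp_off c d (s0 + dvec g a b)%R|)%N.
    by apply/card_gt1P; exists i, j.
  by rewrite H.
case/boolP: ((a == c) || (a == d)) => [acd|].
  have ak k : k != c -> k != d -> k != a by move=> kc kd; case/orP: acd => /eqP ->.
  have [i0b|i0b] := eqVneq i0 b.
    move: (H (s0 i0)); suff -> : supp_off c d (s0 + dvec (s0 i0) a b) = set0 by rewrite cards0.
    apply/setP => k; rewrite mem_supp_off inE; apply/negbTE/negP => /and3P[kc kd].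
    rewrite !ffunE (s0E k kc kd) (negbTE (ak k kc kd)) -i0b.
    by case: (eqVneq k i0) => _; apply/negP; rewrite /= negbK; apply/eqP; ring.
  apply: (two_off (s0 i0) i0 b i0b); rewrite mem_supp_off ?i0c ?i0d ?bc ?bd !ffunE //=.
    by rewrite (negbTE (ak _ i0c i0d)) (negbTE i0b); nonzero_as (s0 i0).
  have bi0 : b != i0 by rewrite eq_sym.
  by rewrite (s0E b bc bd) (negbTE bi0); coord; nonzero_as (- s0 i0); rewrite oppr_eq0.
rewrite negb_or => /andP[ac ad].
have [g /and3P[g0 gi0 gNi0]] : exists g : 'Z_n, [&& g != 0, g != s0 i0 & g != - s0 i0].
  by apply: avoid3; rewrite card_ord Zp_cast //; apply: leq_trans hn.
apply: (two_off g a b ab); rewrite mem_supp_off ?ac ?ad ?bc ?bd !ffunE //=.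
  rewrite (s0E a ac ad); simp_neq; rewrite /=.
  by case: (eqVneq a i0) => _; [nonzero_as (g + s0 i0); rewrite addr_eq0 | nonzero_as g].
rewrite (s0E b bc bd); simp_neq; rewrite /=.
case: (eqVneq b i0) => _; first by nonzero_as (s0 i0 - g); rewrite subr_eq0 eq_sym.
by nonzero_as (- g); rewrite oppr_eq0.
Qed.

End Parallel.

Section LinkedLines.

Variables m n : nat.
Local Notation V := (csr_vertex m n).

Lemma linked_supp_off (Y Z v : V) a b c d : c != d ->
  linked (coset_S (val Y) a b) (coset_S (val Z) c d) -> v \in coset_S (val Y) a b ->
  #|supp_off c d (val v - val Z)| = 1%N.
Proof.
move=> cd [disj nbrs] vK; have /card_gt1P[z1 [z2 []]] := nbrs v vK.
rewrite [z1 \in _]inE [z2 \in _]inE.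
move=> /andP[/coset_SP[g1 E1] vz1] /andP[/coset_SP[g2 E2] vz2] z12.
have [i [j [e [ij e0 Ev]]]] := adj_dvecP vz1.
have EvZ : val v = val Z + (dvec e i j + dvec g1 c d) by rewrite Ev E1; ffun_ring.
rewrite EvZ addrC addKr supp_offD_dvec /supp_off supp_dvec //; apply: card_setD2 => //.
case iB: (i \in [set c; d]); case jB: (j \in [set c; d]) => //=.
  suff : v \in coset_S (val Z) c d by rewrite (disjointFr disj vK).
  apply/coset_SP; move: iB jB; rewrite !inE => /orP[]/eqP ic /orP[]/eqP jc; subst i j.
  - by rewrite eqxx in ij.
  - by exists (g1 + e); rewrite EvZ; ffun_ring.
  - by exists (g1 - e); rewrite EvZ; ffun_ring.
  - by rewrite eqxx in ij.
have g12 : g1 - g2 != 0.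
  by rewrite subr_eq0; apply: contraNneq z12 => g12; apply/eqP/val_inj; rewrite E1 E2 g12.
move: iB jB; rewrite !inE => /negbT; rewrite negb_or => /andP[ic id] /negbT.
rewrite negb_or => /andP[jc jd]; suff : ~~ csr_adj v z2 by rewrite vz2.
apply: (nadj_shifts EvZ E2 ij ic jc); coord.
- by nonzero_as e.
- by nonzero_as (- e); rewrite oppr_eq0.
- by nonzero_as (g1 - g2).
Qed.

Lemma linked_same_pair (Y Z : V) a b c d : (3 < n)%N -> a != b -> c != d ->
  linked (coset_S (val Y) a b) (coset_S (val Z) c d) -> [set a; b] = [set c; d].
Proof.
move=> hn ab cd hl.
have H g : #|supp_off c d ((val Y - val Z) + dvec g a b)| = 1%N.
  rewrite -(linked_supp_off cd hl (v := shift Y (dvec g a b))).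
    by rewrite val_shift_dvec addrAC.
  by apply/coset_SP; exists g; rewrite val_shift_dvec.
have ba : b != a by rewrite eq_sym.
have acd : (a == c) || (a == d).
  by apply: (supp_off_single_pair hn ba) => g; rewrite dvec_swap; apply: H.
exact: (setU2_eq ab acd (supp_off_single_pair hn ab H)).
Qed.

Lemma coset_same_pair (Y Y' : V) p q r s : p != q -> r != s ->
  coset_S (val Y) p q = coset_S (val Y') r s -> [set p; q] = [set r; s].
Proof.
move=> pq rs E.
have /coset_SP[g EY] : Y \in coset_S (val Y') r s by rewrite -E coset_S_id.
have /coset_SP[g' EY1] : shift Y (dvec 1 p q) \in coset_S (val Y') r s.
  by rewrite -E; apply/coset_SP; exists 1; rewrite val_shift_dvec.
have D : dvec 1 p q = dvec (g' - g) r s.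
  by rewrite -dvecB -(val_sub_shifts EY1 EY) val_shift_dvec addrC addKr.
have g0 : g' - g != 0.
  apply/eqP => g0; move/ffunP/(_ p): D; rewrite g0 dvec0 dvec_l // ffunE => /eqP.
  by rewrite oner_eq0.
by rewrite -(supp_dvec (n := n) (c := 1) pq (oner_neq0 _)) D supp_dvec.
Qed.

End LinkedLines.

(** * Transporting the direction of the image *)

Section Chain.

Variables (m n : nat) (psi : csr_vertex m n -> csr_vertex m n).
Hypotheses (hn : (3 < n)%N) (hm : (3 < m)%N) (hpsi : csr_automorphism psi).
Local Notation V := (csr_vertex m n).

Definition image_dir (K : {set V}) (P : {set 'I_m}) :=
  exists (Y : V) p q, [/\ p != q, P = [set p; q] & psi @: K = coset_S (val Y) p q].

Lemma image_dir_step (X X'' : V) a b c be P : a != b -> c != a -> c != b -> be != 0 ->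
  val X'' = val X + dvec be a c ->
  image_dir (coset_S (val X) a b) P -> image_dir (coset_S (val X'') a b) P.
Proof.
move=> ab ca cb be0 EX [Y [p [q [pq -> EY]]]].
have [p' [q' [pq' E']]] := aut_maps_line X'' hm hpsi ab.
case: hpsi => psi_bij psi_adj.
have := linked_aut (bij_inj psi_bij) psi_adj (linked_step ab ca cb be0 EX).
by rewrite EY E' => /(linked_same_pair hn pq pq') ->; exists (psi X''), p', q'.
Qed.

Lemma image_dir_off0 (X X' : V) a b P : a != b -> supp_off a b (val X' - val X) = set0 ->
  image_dir (coset_S (val X) a b) P -> image_dir (coset_S (val X') a b) P.
Proof.
move=> ab S0; have off k : k != a -> k != b -> (val X' - val X) k = 0.
  move=> ka kb; apply/eqP; move/setP/(_ k): S0; rewrite mem_supp_off inE ka kb /=.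
  by move/negbT; rewrite negbK.
have E : val X' - val X = dvec ((val X' - val X) a) a b.
  by apply: (zero_sum_on_pair ab _ off); rewrite vsumB !vsum_val subrr.
by rewrite (coset_S_shift (X' := X') (g := (val X' - val X) a)) // -E addrC subrK.
Qed.

Lemma image_dir_chain (a b : 'I_m) (P : {set 'I_m}) (k : nat) : a != b -> forall X X' : V,
  (#|supp_off a b (val X' - val X)%R| <= k)%N ->
  image_dir (coset_S (val X) a b) P -> image_dir (coset_S (val X') a b) P.
Proof.
move=> ab; elim: k => [|k IH] X X' hk hX.
  by apply: image_dir_off0 hX => //; apply/eqP; rewrite -cards_eq0 -leqn0.
have [S0|[c cS]] := set_0Vmem (supp_off a b (val X' - val X)); first exact: image_dir_off0 hX.
move: (cS); rewrite mem_supp_off => /and3P[ca cb be0].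
set be := (val X' - val X) c in be0; have nbe0 : - be != 0 by rewrite oppr_eq0.
set X'' := shift X (dvec (- be) a c).
have EX'' : val X'' = val X + dvec (- be) a c := val_shift_dvec _ _ _ _.
apply: (IH X''); last exact: image_dir_step ab ca cb nbe0 EX'' hX.
have sub : supp_off a b (val X' - val X'') \subset supp_off a b (val X' - val X) :\ c.
  apply/subsetP => j; rewrite in_setD1 !mem_supp_off EX'' !ffunE => /and3P[ja jb].
  have [jc|jc] := eqVneq j c; last by simp_neq; rewrite /= => h; apply: neq0_of_eq h; ring.
  by subst j; rewrite /be !ffunE; simp_neq; rewrite /= => /eqP[]; ring.
apply: leq_trans (subset_leq_card sub) _.
by move: hk; rewrite (cardsD1 c) cS add1n ltnS.
Qed.

End Chain.

Local Close Scope ring_scope.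

Theorem lemma4 (m n : nat) (hn : (4 <= n)%N) (hm : (3 < m)%N)
  (psi : csr_vertex m n -> csr_vertex m n) (hpsi : csr_automorphism psi)
  (a b : 'I_m) (hab : a != b) (xi xi' : csr_vertex m n)
  (vs vs' : csr_vertex m n) (p q r s : 'I_m) (hpq : p != q) (hrs : r != s) :
  psi @: coset_S (val xi) a b = coset_S (val vs) p q ->
  psi @: coset_S (val xi') a b = coset_S (val vs') r s ->
  [set p; q] = [set r; s].
Proof.
move=> H1 H2; have hX : image_dir psi (coset_S (val xi) a b) [set p; q] by exists vs, p, q.
have [Y [p' [q' [pq' -> EY]]]] :=
  image_dir_chain hn hm hpsi hab (leqnn #|supp_off a b (val xi' - val xi)%R|) hX.
exact: (coset_same_pair pq' hrs (etrans (esym EY) H2)).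
Qed.
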